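(* For any formula $\phi$ of $\mathsf{BSML}$, if $\phi$ has the empty state property (i.e., $M,\emptyset\models\phi$ for every model $M$), then $\phi$ is downward closed (i.e., $M,s\models\phi$ and $t\subseteq s$ imply $M,t\models\phi$).
   Context: Formulas of $\mathsf{BSML}$: $\phi ::= p \mid \neg\phi \mid (\phi\wedge\phi) \mid (\phi\vee\phi) \mid \Diamond\phi \mid \mathrm{NE}$. Models $M=(W,R,V)$ are Kripke models; states are subsets $s\subseteq W$; $R[w]=\{v:wRv\}$. Support/anti-support: $s\models p$ iff $s\subseteq V(p)$; $s\dashv p$ iff $s\cap V(p)=\emptyset$; $s\models\mathrm{NE}$ iff $s\ne\emptyset$; $s\dashv\mathrm{NE}$ iff $s=\emptyset$; $s\models\neg\phi$ iff $s\dashv\phi$; $s\dashv\neg\phi$ iff $s\models\phi$; $s\models\phi\wedge\psi$ iff both; $s\dashv\phi\wedge\psi$ iff $s=t\cup u$ with $t\dashv\phi$, $u\dashv\psi$; $s\models\phi\vee\psi$ iff $s=t\cup u$ with $t\models\phi$, $u\models\psi$; $s\dashv\phi\vee\psi$ iff $s\dashv\phi$ and $s\dashv\psi$; $s\models\Diamond\phi$ iff each $w\in s$ has a nonempty $t\subseteq R[w]$ with $t\models\phi$; $s\dashv\Diamond\phi$ iff $R[w]\dashv\phi$ for all $w\in s$. *)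

Inductive form : Type :=
  | Atom : nat -> form
  | Neg : form -> form
  | Conj : form -> form -> form
  | Disj : form -> form -> form
  | Dia : form -> form
  | NE : form.

Record model : Type := Model {
  world : Type;
  rel : world -> world -> Prop;
  val : nat -> world -> Prop
}.

Definition state (M : model) : Type := world M -> Prop.

Definition subset {M : model} (t s : state M) : Prop := forall w, t w -> s w.
Definition is_union {M : model} (s t u : state M) : Prop :=
  forall w, s w <-> (t w \/ u w).
Definition empty_state (M : model) : state M := fun _ => False.
Definition succ {M : model} (w : world M) : state M := fun v => rel M w v.

Fixpoint supp (M : model) (s : state M) (f : form) {struct f} : Prop :=
  match f with
  | Atom p => forall w, s w -> val M p w
  | Neg g => anti M s g
  | Conj g h => supp M s g /\ supp M s h
  | Disj g h => exists t u : state M, is_union s t u /\ supp M t g /\ supp M u h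
  | Dia g => forall w, s w ->
      exists t : state M, (exists v, t v) /\ subset t (succ w) /\ supp M t g
  | NE => exists w, s w
  end
with anti (M : model) (s : state M) (f : form) {struct f} : Prop :=
  match f with
  | Atom p => forall w, s w -> ~ val M p w
  | Neg g => supp M s g
  | Conj g h => exists t u : state M, is_union s t u /\ anti M t g /\ anti M u h
  | Disj g h => anti M s g /\ anti M s h
  | Dia g => forall w, s w -> anti M (succ w) g
  | NE => forall w, ~ s w
  end.

Definition empty_state_property (f : form) : Prop :=
  forall M : model, supp M (empty_state M) f.

Definition downward_closed (f : form) : Prop :=
  forall (M : model) (s t : state M), supp M s f -> subset t s -> supp M t f.

(** Every BSML formula is union closed and convex, for support and
    anti-support simultaneously (the two are intertwined by negation).
    Convexity says that support passes from [t] and [s] to every [u] with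
    [t ⊆ u ⊆ s]; taking [t] to be the empty state, the empty state property
    turns convexity into downward closure.  Union closure is needed for the
    split connectives: if [t = t1 ∪ t2] and [s = s1 ∪ s2] are splittings,
    then [u] splits as [(u ∩ (t1 ∪ s1)) ∪ (u ∩ (t2 ∪ s2))], and each part
    lies between [ti] and [ti ∪ si], which supports the component by union
    closure. *)


Section StateProperties.

Variable M : model.

Definition union_closed (P : state M -> Prop) : Prop :=
  forall s t u, P s -> P t -> is_union u s t -> P u.

Definition convex (P : state M -> Prop) : Prop :=
  forall t u s, P t -> P s -> subset t u -> subset u s -> P u.

Definition split_into (P Q : state M -> Prop) (s : state M) : Prop :=
  exists t u, is_union s t u /\ P t /\ Q u.

Definition pointwise (A : world M -> Prop) (s : state M) : Prop :=
  forall w, s w -> A w.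

Lemma union_closed_pointwise (A : world M -> Prop) :
  union_closed (pointwise A).
Proof. intros s t u Hs Ht Hu w Hw; apply Hu in Hw; destruct Hw; auto. Qed.

Lemma convex_pointwise (A : world M -> Prop) : convex (pointwise A).
Proof. intros t u s _ Hs _ Hus w Hw; auto. Qed.

Lemma union_closed_nonempty : union_closed (fun s => exists w, s w).
Proof. intros s t u [w Hw] _ Hu; exists w; apply Hu; auto. Qed.

Lemma convex_nonempty : convex (fun s => exists w, s w).
Proof. intros t u s [w Hw] _ Htu _; exists w; auto. Qed.

Lemma union_closed_and (P Q : state M -> Prop) :
  union_closed P -> union_closed Q -> union_closed (fun s => P s /\ Q s).
Proof. intros HP HQ s t u [Ps Qs] [Pt Qt] Hu; split; eauto. Qed.

Lemma convex_and (P Q : state M -> Prop) :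
  convex P -> convex Q -> convex (fun s => P s /\ Q s).
Proof. intros HP HQ t u s [Pt Qt] [Ps Qs] Htu Hus; split; eauto. Qed.

Lemma union_closed_split (P Q : state M -> Prop) :
  union_closed P -> union_closed Q -> union_closed (split_into P Q).
Proof.
  intros HP HQ s t u [s1 [s2 [Hs [Ps1 Qs2]]]] [t1 [t2 [Ht [Pt1 Qt2]]]] Hu.
  exists (fun w => s1 w \/ t1 w), (fun w => s2 w \/ t2 w); split; [|split].
  - intro w; specialize (Hu w); specialize (Hs w); specialize (Ht w); tauto.
  - apply (HP s1 t1); auto; intro; tauto.
  - apply (HQ s2 t2); auto; intro; tauto.
Qed.

Lemma convex_split (P Q : state M -> Prop) :
  union_closed P -> union_closed Q -> convex P -> convex Q ->
  convex (split_into P Q).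
Proof.
  intros UP UQ CP CQ t u s [t1 [t2 [Ht [Pt1 Qt2]]]] [s1 [s2 [Hs [Ps1 Qs2]]]]
    Htu Hus.
  assert (Pts1 : P (fun w => t1 w \/ s1 w)) by (apply (UP t1 s1); auto; intro; tauto).
  assert (Qts2 : Q (fun w => t2 w \/ s2 w)) by (apply (UQ t2 s2); auto; intro; tauto).
  exists (fun w => u w /\ (t1 w \/ s1 w)), (fun w => u w /\ (t2 w \/ s2 w)).
  split; [|split].
  - intro w; split.
    + intro Hw; pose proof (proj1 (Hs w) (Hus w Hw)); tauto.
    + intros [[Hw _]|[Hw _]]; exact Hw.
  - apply (CP t1 _ (fun w => t1 w \/ s1 w)); auto.
    + intros w Hw; split; [apply Htu, Ht|]; tauto.
    + intros w Hw; tauto.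
  - apply (CQ t2 _ (fun w => t2 w \/ s2 w)); auto.
    + intros w Hw; split; [apply Htu, Ht|]; tauto.
    + intros w Hw; tauto.
Qed.

Lemma convex_downward_closed (P : state M -> Prop) :
  convex P -> P (empty_state M) ->
  forall s t, P s -> subset t s -> P t.
Proof. intros CP P0 s t Ps Hts; apply (CP (empty_state M) t s); auto; intros w []. Qed.

End StateProperties.

Lemma bsml_union_closed (M : model) (f : form) :
  union_closed M (fun s => supp M s f) /\ union_closed M (fun s => anti M s f).
Proof.
  induction f as [p|g IH|g [Sg Ag] h [Sh Ah]|g [Sg Ag] h [Sh Ah]|g _|]; simpl.
  - split; apply union_closed_pointwise.
  - tauto.
  - split; [apply union_closed_and | apply union_closed_split]; assumption.
  - split; [apply union_closed_split | apply union_closed_and]; assumption.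
  - split; apply union_closed_pointwise.
  - split; [apply union_closed_nonempty | apply union_closed_pointwise].
Qed.

Lemma bsml_convex (M : model) (f : form) :
  convex M (fun s => supp M s f) /\ convex M (fun s => anti M s f).
Proof.
  induction f as [p|g IH|g IHg h IHh|g IHg h IHh|g _|]; simpl.
  - split; apply convex_pointwise.
  - tauto.
  - destruct (bsml_union_closed M g), (bsml_union_closed M h), IHg, IHh.
    split; [apply convex_and | apply convex_split]; assumption.
  - destruct (bsml_union_closed M g), (bsml_union_closed M h), IHg, IHh.
    split; [apply convex_split | apply convex_and]; assumption.
  - split; apply convex_pointwise.
  - split; [apply convex_nonempty | apply convex_pointwise].
Qed.

Theorem lemma3p18 (phi : form) :
  empty_state_property phi -> downward_closed phi.
Proof.
  intros Hempty M.
  apply convex_downward_closed; [apply (bsml_convex M phi) | apply Hempty].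
Qed.
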